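(* Let $p$ be a positive integer and let $Y$ be a lens space with $|H_1(Y)|=p$. Suppose that \[ \lambda(Y) - \lambda(L(p,1)) \leq \frac14\Big(\frac{p}{4}-1\Big). \] Then $Y$ is (orientation-preservingly) homeomorphic to one of $L(p,1)$, $L(p,2)$, or $L(p,3)$.
   Context: Orientation convention: $L(p,q)$ is $-p/q$ surgery on the unknot; in particular $L(p,1)$ is $-p$ surgery on the unknot, and $L(p,-q)$ is $L(p,q)$ with reversed orientation. $\lambda$ denotes the Casson–Walker invariant, normalized so that $\lambda(S^3)=0$, $\lambda(L(p,-q))=-\lambda(L(p,q))$, and for relatively prime $p>q>0$, $\lambda(L(p,q)) = \tfrac14 - \tfrac{p^2+q^2+1}{12pq} - \lambda(L(q,p))$. All homeomorphisms are orientation preserving. *)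

From mathcomp Require Import all_boot all_order all_algebra.
Set Implicit Arguments. Unset Strict Implicit. Unset Printing Implicit Defensive.
Import Order.TTheory GRing.Theory Num.Theory.
Local Open Scope ring_scope.

(* A lens space L(p,q): p a positive integer, q an integer coprime to p.
   (L(p,q) = -p/q surgery on the unknot; |H_1(L(p,q))| = p.) *)
Record lens := Lens { lens_p : nat; lens_q : int }.

Definition is_lens (Y : lens) : Prop :=
  (0 < lens_p Y)%N /\ coprimez (lens_q Y) (Posz (lens_p Y)).

Definition H1_order (Y : lens) : nat := lens_p Y.

(* Orientation-preserving homeomorphism of lens spaces, via the
   Reidemeister classification: L(p,q) ~= L(p',q') (or.-pres.) iff
   p = p' and q' = q or q q' = 1 (mod p). *)
Definition lens_homeo (Y Z : lens) : Prop :=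
  lens_p Y = lens_p Z /\
  ((lens_q Z == lens_q Y %[mod Posz (lens_p Y)])%Z \/
   (lens_q Y * lens_q Z == 1 %[mod Posz (lens_p Y)])%Z).

(* Casson-Walker invariant of L(p,r), 0 <= r < p, gcd(p,r)=1, computed by the
   recursion of the context: lambda(S^3)=lambda(L(1,r))=0 and for p>r>0,
   lambda(L(p,r)) = 1/4 - (p^2+r^2+1)/(12pr) - lambda(L(r,p)),
   with L(r,p) = L(r, p mod r).  [fuel] bounds the recursion depth. *)
Fixpoint cw_aux (fuel p r : nat) : rat :=
  match fuel with
  | 0%N => 0
  | S f => if r == 0%N then 0
           else 1/4 - ((p ^ 2 + r ^ 2 + 1)%N%:R / (12 * p * r)%N%:R)
                - cw_aux f r (p %% r)
  end.

(* lambda(L(p,q)) for arbitrary integer q coprime to p: depends only on q mod p. *)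
Definition casson_walker (Y : lens) : rat :=
  let p := lens_p Y in
  cw_aux p p (absz (lens_q Y %% Posz p)%Z).

(* Write l(m, x) for the Casson-Walker invariant of L(m, x), 0 <= x < m.  The
   recursion defining it is the reciprocity law
   12 m x (l(m, x) + l(x, m mod x)) = 3 m x - m^2 - x^2 - 1, which also yields
   l(m, m - x) = - l(m, x).  Together they give the descent
   l(m, x) = l(x, y) + (3 m x - m^2 - x^2 - 1) / (12 m x), y = x - m mod x < x.
   By strong induction on m, 48 l(m, x) >= 4 - m unless x or its inverse modulo m
   lies in {1, 2, 3}: if (x, y) is not exceptional the induction hypothesis
   suffices, and otherwise l(x, y) is known in closed form (up to the bounded
   term l(3, x mod 3)), so the claim reduces to a polynomial inequality.
   Since 12 p l(p, 1) = 3 p - p^2 - 2, the bound gives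
   l(p, q) - l(p, 1) >= p/16 - 1/6 + 1/(6p) > (p/4 - 1)/4 for every
   non-exceptional q, while the exceptional residues are exactly those of lens
   spaces homeomorphic to L(p,1), L(p,2) or L(p,3). *)

From mathcomp Require Import all_boot all_order all_algebra.
From mathcomp Require Import ring lra zify.
Import Order.TTheory GRing.Theory Num.Theory.
Set Implicit Arguments. Unset Strict Implicit. Unset Printing Implicit Defensive.
Local Open Scope ring_scope.

Definition cw (p r : nat) : rat := cw_aux r.+1 p r.

Definition reciprocity_rhs (p r : rat) : rat := 3 * p * r - p ^+ 2 - r ^+ 2 - 1.

Lemma cw_aux_fuel f g p r : (r < f)%N -> (r < g)%N -> cw_aux f p r = cw_aux g p r.
Proof.
elim: f g p r => [|f IH] [|g] p r //= r_lt_f r_lt_g.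
case: eqP => // /eqP r_neq0; congr (_ - _).
by apply: IH; apply: leq_trans (ltn_pmod _ _) _; rewrite ?lt0n.
Qed.

Lemma cw_rec p r : (0 < r)%N ->
  cw p r = 1/4 - (p ^ 2 + r ^ 2 + 1)%N%:R / (12 * p * r)%N%:R - cw r (p %% r).
Proof.
by case: r => // r _; rewrite [in RHS]/cw (@cw_aux_fuel _ r.+1) ?ltn_pmod.
Qed.

Lemma cw0 p : cw p 0 = 0. Proof. by []. Qed.

Lemma cw_reciprocity p r : (0 < p)%N -> (0 < r)%N ->
  12 * p%:R * r%:R * (cw p r + cw r (p %% r)) = reciprocity_rhs p%:R r%:R.
Proof.
move=> p_gt0 r_gt0; rewrite (cw_rec p r_gt0) /reciprocity_rhs !natrD !natrM; field.
by rewrite !pnatr_eq0 -!lt0n p_gt0 r_gt0.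
Qed.

Lemma cw_p1 p : (0 < p)%N -> 12 * p%:R * cw p 1 = reciprocity_rhs p%:R 1.
Proof.
by move=> p_gt0; have := cw_reciprocity p_gt0 (ltn0Sn 0); rewrite modn1 cw0 addr0 mulr1.
Qed.

Lemma cw21 : cw 2 1 = 0. Proof. by apply/eqP; vm_compute. Qed.

Lemma cw3_le k : (k < 3)%N -> cw 3 k <= 1/18.
Proof.
move=> k_lt3; have [->|[->|->]] : (k = 0 \/ k = 1 \/ k = 2)%N by lia.
all: by vm_compute.
Qed.

Lemma cw_opp_lt m x : (0 < x)%N -> (x.*2 < m)%N -> cw m (m - x) = - cw m x.
Proof.
move=> x_gt0 lt_2x_m.
have m_eq : m = (m - x + x)%N by lia.
have mod_mx : (m %% (m - x) = x)%N by rewrite {1}m_eq modnDl modn_small //; lia.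
have mod_x : ((m - x) %% x = m %% x)%N by rewrite {2}m_eq modnDr.
have m_gt0 : (0 < m - x)%N by lia.
rewrite (cw_rec m m_gt0) mod_mx (cw_rec (m - x) x_gt0) mod_x (cw_rec m x_gt0).
rewrite !natrD !natrM !natrB; try lia.
field; rewrite subr_eq0 !pnatr_eq0 eqr_nat; lia.
Qed.

Lemma cw_opp m x : (0 < x < m)%N -> coprime x m -> cw m (m - x) = - cw m x.
Proof.
case/andP=> x_gt0 x_lt_m cop_xm.
case: (ltngtP x.*2 m) => [lt_2x_m|lt_m_2x|eq_2x_m]; first exact: cw_opp_lt.
- by rewrite -[in RHS](subKn (ltnW x_lt_m)) (@cw_opp_lt m (m - x)) ?opprK //; lia.
- have x1 : x = 1%N.
    by apply/eqP; move: cop_xm; rewrite -eq_2x_m -addnn /coprime gcdnDl gcdnn.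
  by move: eq_2x_m; rewrite x1 => <-; rewrite cw21 oppr0.
Qed.

Lemma coprime_subl r x : (r <= x)%N -> coprime (x - r) x = coprime r x.
Proof. by move=> le_rx; rewrite /coprime -{2 3}(subnK le_rx) gcdnDl gcdnDr gcdnC. Qed.

Lemma coprime_modn_gt0 m x : (1 < x)%N -> coprime x m -> (0 < m %% x)%N.
Proof.
move=> x_gt1 cop_xm; rewrite lt0n; apply: contraTneq cop_xm => r0.
by rewrite /coprime (gcdn_idPl _) ?gtn_eqF // /dvdn r0.
Qed.

Lemma cw_descent m x : (1 < x < m)%N -> coprime x m ->
  12 * m%:R * x%:R * (cw m x - cw x (x - m %% x)) = reciprocity_rhs m%:R x%:R.
Proof.
case/andP=> x_gt1 x_lt_m cop_xm.
have r_gt0 := coprime_modn_gt0 x_gt1 cop_xm.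
have opp_r : cw x (x - m %% x) = - cw x (m %% x).
  apply: cw_opp; last by rewrite coprime_modl coprime_sym.
  by rewrite r_gt0 ltn_pmod //; lia.
by rewrite opp_r opprK; apply: cw_reciprocity; lia.
Qed.

(* For [0 < x < m]: [x] or its inverse modulo [m] is 1, 2 or 3. *)
Definition exceptional (m x : nat) : bool :=
  [|| x == 1, x == 2, x == 3, x.*2 == m.+1, 3 * x == m.+1 | 3 * x == m.*2.+1]%N.

Lemma monomial_ge0 (u v : rat) i j : 0 <= u -> 0 <= v -> 0 <= u ^+ i * v ^+ j.
Proof. by move=> u_ge0 v_ge0; rewrite mulr_ge0 ?exprn_ge0. Qed.

(* The inequalities below are proved by clearing denominators: the claim becomes
   a polynomial with nonnegative coefficients in shifted variables [u, v >= 0],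
   so [lra] closes it once it knows that the monomials [u^i v^j] are nonnegative. *)
Ltac monomials_ge0 hu hv :=
  have ? := monomial_ge0 1 0 hu hv; have ? := monomial_ge0 2 0 hu hv;
  have ? := monomial_ge0 0 1 hu hv; have ? := monomial_ge0 1 1 hu hv;
  have ? := monomial_ge0 2 1 hu hv; have ? := monomial_ge0 0 2 hu hv;
  have ? := monomial_ge0 1 2 hu hv; have ? := monomial_ge0 2 2 hu hv;
  have ? := monomial_ge0 0 3 hu hv; have ? := monomial_ge0 1 3 hu hv;
  have ? := monomial_ge0 2 3 hu hv; have ? := monomial_ge0 0 4 hu hv;
  have ? := monomial_ge0 1 4 hu hv; have ? := monomial_ge0 2 4 hu hv;
  have ? := monomial_ge0 0 5 hu hv; have ? := monomial_ge0 1 5 hu hv;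
  have ? := monomial_ge0 2 5 hu hv.

Lemma descent_ineq_generic (X M cm cy : rat) : 4 <= X -> X + 1 <= M ->
  12 * M * X * (cm - cy) = reciprocity_rhs M X -> 4 - X <= 48 * cy -> 4 - M <= 48 * cm.
Proof.
rewrite /reciprocity_rhs => X_ge4 M_ge hM IH.
have c_gt0 : 0 < M * X by apply: mulr_gt0; lra.
rewrite -subr_ge0 -(pmulr_rge0 _ c_gt0).
have := ler_wpM2l (ltW c_gt0) IH.
have hk : 0 <= M - X - 1 by lra.
have hX : 0 <= X - 4 by lra.
monomials_ge0 hk hX.
lra.
Qed.

Lemma descent_ineq_y1 (A X M cm c1 : rat) : 3 <= A -> 4 <= X -> M + 1 = A * X + X ->
  12 * M * X * (cm - c1) = reciprocity_rhs M X -> 12 * X * c1 = reciprocity_rhs X 1 ->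
  4 - M <= 48 * cm.
Proof.
rewrite /reciprocity_rhs => A_ge3 X_ge4 M_eq hM h1.
have {}M_eq : M = A * X + X - 1 by lra.
have c_gt0 : 0 < M * X by rewrite M_eq; apply: mulr_gt0; nra.
rewrite -subr_ge0 -(pmulr_rge0 _ c_gt0).
have := congr1 (fun t => M * t) h1.
have hA : 0 <= A - 3 by lra.
have hX : 0 <= X - 4 by lra.
subst M; monomials_ge0 hA hX.
lra.
Qed.

Lemma descent_ineq_y2 (A X M cm c2 : rat) : 1 <= A -> 5 <= X -> M + 2 = A * X + X ->
  12 * M * X * (cm - c2) = reciprocity_rhs M X -> 12 * X * 2 * c2 = reciprocity_rhs X 2 ->
  4 - M <= 48 * cm.
Proof.
rewrite /reciprocity_rhs => A_ge1 X_ge5 M_eq hM h2.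
have {}M_eq : M = A * X + X - 2 by lra.
have c_gt0 : 0 < M * X by rewrite M_eq; apply: mulr_gt0; nra.
rewrite -subr_ge0 -(pmulr_rge0 _ c_gt0).
have := congr1 (fun t => M * t) h2.
have hA : 0 <= A - 1 by lra.
have hX : 0 <= X - 5 by lra.
subst M; monomials_ge0 hA hX.
lra.
Qed.

Lemma descent_ineq_y3 (A X M cm c3 d : rat) : 1 <= A -> 4 <= X -> M + 3 = A * X + X ->
  12 * M * X * (cm - c3) = reciprocity_rhs M X ->
  12 * X * 3 * (c3 + d) = reciprocity_rhs X 3 ->
  d <= 1/18 -> 4 - M <= 48 * cm.
Proof.
rewrite /reciprocity_rhs => A_ge1 X_ge4 M_eq hM h3 d_le.
have {}M_eq : M = A * X + X - 3 by lra.
have c_gt0 : 0 < M * X by rewrite M_eq; apply: mulr_gt0; nra.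
rewrite -subr_ge0 -(pmulr_rge0 _ c_gt0).
have := congr1 (fun t => M * t) h3.
have := ler_wpM2l (ltW c_gt0) d_le.
have hA : 0 <= A - 1 by lra.
have hX : 0 <= X - 4 by lra.
subst M; monomials_ge0 hA hX.
lra.
Qed.

Lemma descent_ineq_half (A Y X M cm cy c1 : rat) : 2 <= A -> 4 <= Y ->
  X + 1 = Y * 2 -> M + 1 = A * X + Y ->
  12 * M * X * (cm - cy) = reciprocity_rhs M X ->
  12 * X * Y * (cy - c1) = reciprocity_rhs X Y ->
  12 * Y * c1 = reciprocity_rhs Y 1 -> 4 - M <= 48 * cm.
Proof.
rewrite /reciprocity_rhs => A_ge2 Y_ge4 X_eq M_eq hM hX h1.
have {}M_eq : M = A * X + Y - 1 by lra.
have {}X_eq : X = 2 * Y - 1 by lra.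
have c_gt0 : 0 < M * X * Y by rewrite M_eq X_eq; apply: mulr_gt0; [apply: mulr_gt0|]; nra.
rewrite -subr_ge0 -(pmulr_rge0 _ c_gt0).
have := congr1 (fun t => Y * t) hM.
have := congr1 (fun t => M * t) hX.
have := congr1 (fun t => M * X * t) h1.
have hA : 0 <= A - 2 by lra.
have hY : 0 <= Y - 4 by lra.
subst M X; monomials_ge0 hA hY.
lra.
Qed.

Lemma descent_ineq_third (A Y X M cm cy c1 : rat) : 1 <= A -> 4 <= Y ->
  X + 1 = Y * 3 -> M + 1 = A * X + Y * 2 ->
  12 * M * X * (cm - cy) = reciprocity_rhs M X ->
  12 * X * Y * (cy - c1) = reciprocity_rhs X Y ->
  12 * Y * c1 = reciprocity_rhs Y 1 -> 4 - M <= 48 * cm.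
Proof.
rewrite /reciprocity_rhs => A_ge1 Y_ge4 X_eq M_eq hM hX h1.
have {}M_eq : M = A * X + 2 * Y - 1 by lra.
have {}X_eq : X = 3 * Y - 1 by lra.
have c_gt0 : 0 < M * X * Y by rewrite M_eq X_eq; apply: mulr_gt0; [apply: mulr_gt0|]; nra.
rewrite -subr_ge0 -(pmulr_rge0 _ c_gt0).
have := congr1 (fun t => Y * t) hM.
have := congr1 (fun t => M * t) hX.
have := congr1 (fun t => M * X * t) h1.
have hA : 0 <= A - 1 by lra.
have hY : 0 <= Y - 4 by lra.
subst M X; monomials_ge0 hA hY.
lra.
Qed.

Lemma descent_ineq_two_thirds (A V Y X M cm cy cv c1 : rat) : 1 <= A -> 2 <= V ->
  Y = V * 2 + 1 -> X = V * 3 + 1 -> M = A * X + V ->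
  12 * M * X * (cm - cy) = reciprocity_rhs M X ->
  12 * X * Y * (cy + cv) = reciprocity_rhs X Y ->
  12 * Y * V * (cv + c1) = reciprocity_rhs Y V -> 12 * V * c1 = reciprocity_rhs V 1 ->
  4 - M <= 48 * cm.
Proof.
rewrite /reciprocity_rhs => A_ge1 V_ge2 Y_eq X_eq M_eq hM hX hY h1.
have c_gt0 : 0 < M * X * Y * V.
  by rewrite M_eq X_eq Y_eq; apply: mulr_gt0; [apply: mulr_gt0; [apply: mulr_gt0|]|]; nra.
rewrite -subr_ge0 -(pmulr_rge0 _ c_gt0).
have := congr1 (fun t => Y * V * t) hM.
have := congr1 (fun t => M * V * t) hX.
have := congr1 (fun t => M * X * t) hY.
have := congr1 (fun t => M * X * Y * t) h1.
have hA : 0 <= A - 1 by lra.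
have hV : 0 <= V - 2 by lra.
subst M X Y; monomials_ge0 hA hV.
lra.
Qed.

Section Descent.
Variables m x a r y : nat.
Hypothesis m_eq : m = (a * x + r)%N.
Hypothesis x_eq : x = (r + y)%N.
Hypothesis a_gt0 : (0 < a)%N.
Hypothesis r_gt0 : (0 < r)%N.
Hypothesis y_gt0 : (0 < y)%N.
Hypothesis x_gt3 : (3 < x)%N.
Hypothesis m_nexc : ~~ exceptional m x.
Hypothesis y_coprime : coprime y x.
Hypothesis descent : 12 * m%:R * x%:R * (cw m x - cw x y) = reciprocity_rhs m%:R x%:R.

Let x_gt0 : (0 < x)%N. Proof. exact: ltn_trans x_gt3. Qed.
Let X_ge4 : 4 <= x%:R :> rat. Proof. by rewrite (ler_nat _ 4). Qed.

Lemma descent_bound_generic : 4 - x%:R <= 48 * cw x y -> 4 - m%:R <= 48 * cw m x.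
Proof.
apply: descent_ineq_generic descent => //.
by rewrite natr1 ler_nat m_eq; nia.
Qed.

Lemma descent_bound_y1 : y = 1%N -> 4 - m%:R <= 48 * cw m x.
Proof.
move=> y1; have a_ge3 : (3 <= a)%N.
  suff : a != 1%N /\ a != 2%N by lia.
  by split; apply/eqP => a_eq; move: m_nexc; rewrite /exceptional m_eq a_eq; lia.
have /(congr1 (GRing.natmul (1 : rat))) : (m + 1 = a * x + x)%N by lia.
rewrite !natrD !natrM => M_eq.
move: descent; rewrite y1 => descent1.
apply: (descent_ineq_y1 _ X_ge4 M_eq descent1 (cw_p1 x_gt0)).
by rewrite (ler_nat _ 3).
Qed.

Lemma descent_bound_y2 : y = 2%N -> 4 - m%:R <= 48 * cw m x.
Proof.
move=> y2; have x_odd : odd x by rewrite -coprime2n -y2.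
have x_ge5 : 5 <= x%:R :> rat.
  by rewrite (ler_nat _ 5); move: x_odd; case: (x =P 4%N) => [->//|]; lia.
have /(congr1 (GRing.natmul (1 : rat))) : (m + 2 = a * x + x)%N by lia.
rewrite !natrD !natrM => M_eq.
have := cw_reciprocity x_gt0 (isT : (0 < 2)%N).
rewrite modn2 x_odd cw21 addr0 => rec_x2.
move: descent; rewrite y2 => descent2.
apply: (descent_ineq_y2 _ x_ge5 M_eq descent2 rec_x2).
by rewrite (ler_nat _ 1).
Qed.

Lemma descent_bound_y3 : y = 3%N -> 4 - m%:R <= 48 * cw m x.
Proof.
move=> y3; have /(congr1 (GRing.natmul (1 : rat))) : (m + 3 = a * x + x)%N by lia.
rewrite !natrD !natrM => M_eq.
have rec_x3 := cw_reciprocity x_gt0 (isT : (0 < 3)%N).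
have d_le := cw3_le (ltn_pmod x (isT : (0 < 3)%N)).
move: descent; rewrite y3 => descent3.
apply: (descent_ineq_y3 _ X_ge4 M_eq descent3 rec_x3 d_le).
by rewrite (ler_nat _ 1).
Qed.

Lemma descent_bound_half : (3 < y)%N -> y.*2 = x.+1 -> 4 - m%:R <= 48 * cw m x.
Proof.
move=> y_gt3 y_half; have a_ge2 : (2 <= a)%N.
  suff : a != 1%N by lia.
  by apply/eqP => a_eq; move: m_nexc; rewrite /exceptional m_eq a_eq; lia.
have /(congr1 (GRing.natmul (1 : rat))) : (x + 1 = y * 2)%N by lia.
rewrite !natrD !natrM => X_eq.
have /(congr1 (GRing.natmul (1 : rat))) : (m + 1 = a * x + y)%N by lia.
rewrite !natrD !natrM => M_eq.
have x_mod_y : (x %% y = y - 1)%N.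
  by rewrite (_ : x = y + (y - 1))%N ?modnDl ?modn_small; lia.
have opp_y1 : cw y (y - 1) = - cw y 1 by rewrite cw_opp ?coprime1n //; lia.
have := cw_reciprocity x_gt0 y_gt0; rewrite x_mod_y opp_y1 => rec_xy.
apply: (descent_ineq_half _ _ X_eq M_eq descent rec_xy (cw_p1 y_gt0)).
- by rewrite (ler_nat _ 2).
- by rewrite (ler_nat _ 4).
Qed.

Lemma descent_bound_third : (3 < y)%N -> 3 * y = x.+1 -> 4 - m%:R <= 48 * cw m x.
Proof.
move=> y_gt3 y_third.
have /(congr1 (GRing.natmul (1 : rat))) : (x + 1 = y * 3)%N by lia.
rewrite !natrD !natrM => X_eq.
have /(congr1 (GRing.natmul (1 : rat))) : (m + 1 = a * x + y * 2)%N by lia.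
rewrite !natrD !natrM => M_eq.
have x_mod_y : (x %% y = y - 1)%N.
  by rewrite (_ : x = 2 * y + (y - 1))%N ?modnMDl ?modn_small; lia.
have opp_y1 : cw y (y - 1) = - cw y 1 by rewrite cw_opp ?coprime1n //; lia.
have := cw_reciprocity x_gt0 y_gt0; rewrite x_mod_y opp_y1 => rec_xy.
apply: (descent_ineq_third _ _ X_eq M_eq descent rec_xy (cw_p1 y_gt0)).
- by rewrite (ler_nat _ 1).
- by rewrite (ler_nat _ 4).
Qed.

Lemma descent_bound_two_thirds : (3 < y)%N -> 3 * y = x.*2.+1 -> 4 - m%:R <= 48 * cw m x.
Proof.
move=> y_gt3 y_two_thirds.
have /(congr1 (GRing.natmul (1 : rat))) : (y = r * 2 + 1)%N by lia.
rewrite !natrD !natrM => Y_eq.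
have /(congr1 (GRing.natmul (1 : rat))) : (x = r * 3 + 1)%N by lia.
rewrite !natrD !natrM => X_eq.
have /(congr1 (GRing.natmul (1 : rat))) : (m = a * x + r)%N by [].
rewrite !natrD !natrM => M_eq.
have x_mod_y : (x %% y = r)%N by rewrite x_eq modnDr modn_small; lia.
have y_mod_r : (y %% r = 1)%N.
  by rewrite (_ : y = 2 * r + 1)%N ?modnMDl ?modn_small; lia.
have := cw_reciprocity x_gt0 y_gt0; rewrite x_mod_y => rec_xy.
have := cw_reciprocity y_gt0 r_gt0; rewrite y_mod_r => rec_yr.
apply: (descent_ineq_two_thirds _ _ Y_eq X_eq M_eq descent rec_xy rec_yr (cw_p1 r_gt0)).
- by rewrite (ler_nat _ 1).
- by rewrite (ler_nat _ 2); lia.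
Qed.

Lemma descent_bound_exceptional : exceptional x y -> 4 - m%:R <= 48 * cw m x.
Proof.
have [y1 _|y_ne1] := eqVneq y 1%N; first exact: descent_bound_y1.
have [y2 _|y_ne2] := eqVneq y 2%N; first exact: descent_bound_y2.
have [y3 _|y_ne3] := eqVneq y 3%N; first exact: descent_bound_y3.
have y_gt3 : (3 < y)%N by lia.
rewrite /exceptional (negbTE y_ne1) (negbTE y_ne2) (negbTE y_ne3) /=.
case/or3P => /eqP y_eq.
- exact: descent_bound_half.
- exact: descent_bound_third.
- exact: descent_bound_two_thirds.
Qed.
End Descent.

Lemma cw_lower_bound m x : (0 < x < m)%N -> coprime x m -> ~~ exceptional m x ->
  4 - m%:R <= 48 * cw m x.
Proof.
elim/ltn_ind: m x => m IH x /andP[x_gt0 x_lt_m] cop_xm m_nexc.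
have x_gt3 : (3 < x)%N by move: m_nexc; rewrite /exceptional; lia.
have x_gt1 : (1 < x < m)%N by rewrite x_lt_m (ltn_trans _ x_gt3).
have := cw_descent x_gt1 cop_xm; set r := (m %% x)%N; set y := (x - r)%N => descent.
have r_lt_x : (r < x)%N by rewrite ltn_pmod.
have r_gt0 : (0 < r)%N by apply: coprime_modn_gt0 cop_xm; case/andP: x_gt1.
have y_coprime : coprime y x.
  rewrite coprime_subl; last exact: ltnW.
  by rewrite coprime_modl coprime_sym.
have m_eq := divn_eq m x; rewrite -/r in m_eq.
have a_gt0 : (0 < m %/ x)%N by rewrite divn_gt0 // ltnW.
have x_eq : x = (r + y)%N by rewrite subnKC // ltnW.
have y_gt0 : (0 < y)%N by rewrite subn_gt0.
have [y_exc|y_nexc] := boolP (exceptional x y).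
  exact: (descent_bound_exceptional m_eq x_eq a_gt0 r_gt0 y_gt0 x_gt3 m_nexc y_coprime
           descent y_exc).
apply: (descent_bound_generic m_eq x_eq a_gt0 r_gt0 y_gt0 x_gt3 m_nexc y_coprime descent).
apply: (IH x x_lt_m y _ y_coprime y_nexc).
by rewrite y_gt0 /=; lia.
Qed.

Lemma cw_sub_cw1_gt p n : (0 < n < p)%N -> coprime n p -> ~~ exceptional p n ->
  1/4 * (p%:R / 4 - 1) < cw p n - cw p 1.
Proof.
move=> n_range cop_np p_nexc.
have p_gt0 : (0 < p)%N by move: n_range; lia.
have P_gt0 : 0 < p%:R :> rat by rewrite ltr0n.
have lower := ler_wpM2l (ltW P_gt0) (cw_lower_bound n_range cop_np p_nexc).
have := cw_p1 p_gt0; rewrite /reciprocity_rhs => cw1.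
rewrite -subr_gt0 -(pmulr_rgt0 _ P_gt0).
lra.
Qed.

Definition residue (p : nat) (q : int) : nat := `|(q %% p)%Z|.

Lemma residueE (p : nat) (q : int) : (0 < p)%N -> (q %% p)%Z = residue p q.
Proof. by move=> p_gt0; rewrite /residue gez0_abs // modz_ge0 // eqz_nat -lt0n. Qed.

Lemma residue_lt (p : nat) (q : int) : (0 < p)%N -> (residue p q < p)%N.
Proof. by move=> p_gt0; rewrite -ltz_nat -residueE // ltz_pmod // ltz_nat. Qed.

Lemma coprime_residue (p : nat) (q : int) : coprimez q p -> coprime (residue p q) p.
Proof. by rewrite /residue -[coprime _ _]/(coprimez (q %% p)%Z p) /coprimez gcdz_modl. Qed.

Lemma casson_walker_Lens (p : nat) (q : int) : (0 < p)%N ->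
  casson_walker (Lens p q) = cw p (residue p q).
Proof. by move=> p_gt0; apply: cw_aux_fuel => //; apply: residue_lt. Qed.

Lemma lens_homeo_exceptional (p : nat) (q : int) :
  (1 < p)%N -> exceptional p (residue p q) ->
  lens_homeo (Lens p q) (Lens p 1) \/ lens_homeo (Lens p q) (Lens p 2) \/
  lens_homeo (Lens p q) (Lens p 3).
Proof.
move=> p_gt1; have p_gt0 := ltnW p_gt1.
have qE := residueE q p_gt0; have n_lt := residue_lt q p_gt0.
rewrite /lens_homeo /=; move: qE n_lt; set n := residue p q => qE n_lt.
have mod_small k : (k < p)%N -> (k %% p)%Z = k.
  by move=> k_lt; rewrite modz_small // ltz_nat.
have inv_mod k j : (n * k = j * p + 1)%N -> (q * k == 1 %[mod p])%Z.
  move=> nk; rewrite -modzMml qE -PoszM nk PoszD PoszM modzMDl.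
  by rewrite mod_small.
rewrite /exceptional; case/orP => [/eqP n1|/orP [/eqP n2|/orP [/eqP n3|]]].
- by left; split=> //; left; rewrite qE n1 mod_small.
- by right; left; split=> //; left; rewrite qE n2 mod_small //; lia.
- by right; right; split=> //; left; rewrite qE n3 mod_small //; lia.
case/orP => [/eqP n_half|/orP [/eqP n_third|/eqP n_two_thirds]].
- by right; left; split=> //; right; apply: (inv_mod _ 1); lia.
- by right; right; split=> //; right; apply: (inv_mod _ 1); lia.
- by right; right; split=> //; right; apply: (inv_mod _ 2); lia.
Qed.

Theorem mainTheorem4 (p : nat) (Y : lens) :
  (0 < p)%N -> is_lens Y -> H1_order Y = p ->
  casson_walker Y - casson_walker (Lens p 1) <= (1/4) * (p%:R / 4 - 1) ->
  lens_homeo Y (Lens p 1) \/ lens_homeo Y (Lens p 2) \/ lens_homeo Y (Lens p 3).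
Proof.
case: Y => p' q p_gt0 [_ /= cop_qp] /= p'_eq bound; subst p'.
have [p_le1|p_gt1] := leqP p 1.
  have p1 : p = 1%N by lia.
  by left; split=> //; left; rewrite p1 !modz1.
have [exc|nexc] := boolP (exceptional p (residue p q)).
  exact: lens_homeo_exceptional.
have res_range : (0 < residue p q < p)%N.
  rewrite residue_lt // andbT lt0n.
  by apply: contraTneq (coprime_residue cop_qp) => ->; rewrite /coprime gcd0n gtn_eqF.
have res1 : residue p 1%R = 1%N.
  by apply/eqP; rewrite -eqz_nat -residueE // modz_small // ltz_nat.
move: bound; rewrite !(casson_walker_Lens _ (ltnW p_gt1)) res1 leNgt.
by rewrite (cw_sub_cw1_gt res_range (coprime_residue cop_qp) nexc).
Qed.
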